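(* Consider the ride-hailing model in the context and a demand vector $\bm b^C$ with $0\le b^C_i\le b_i$. The program $\mathcal{CV}(\bm b^C)$ may have multiple optimal solutions (multiple CV equilibria), but all optimal solutions $\bm x^C$: 1. yield the same platform profit $\pi(\bm b^C)=\sum_{i,\alpha}r^{C2P}_{i\alpha}x^C_{i\alpha}$; 2. have the same active mass $m^C_0=\sum_{i,\alpha}\tau^{dr}_{i\alpha}x^C_{i\alpha}$; 3. moreover $\pi(\bm b^C)$, as a function of the CV fleet mass $N$ (with $\bm b^C$ and all other parameters fixed), is non-decreasing in $N$; 4. every optimal solution $\bm x^C$ of $\mathcal{CV}(\bm b^C)$ is also an optimal solution of the problem: maximize $\sum_{i,\alpha}r^C_{i\alpha}x_{i\alpha}$ over $\bm x\ge0$ satisfying $\sum_j x_{ji}\le b^C_i$ for all $i$, flow balance, and $\sum_{i,\alpha}\tau^{dr}_{i\alpha}x_{i\alpha}\le m^C_0$.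
   Context: Model. There are $L$ regions $\{1,\dots,L\}$. For regions $i,j$, $b_{ij}\ge0$ is the customer rate from $i$ to $j$; $b_i=\sum_j b_{ij}$ (assumed $>0$), $q_{ij}=b_{ij}/b_i$. Travel times satisfy $t_{ij}>0$ for $i\ne j$, $t_{ii}=0$. Constants: $p>0$, $c\ge0$, $R\in(0,1)$, CV fleet mass $N>0$. For $i,\alpha$: $\tau^{dr}_{i\alpha}=t_{i\alpha}+\sum_j q_{\alpha j}t_{\alpha j}$, $r^C_{i\alpha}=p(1-R)\sum_j q_{\alpha j}t_{\alpha j}-c\tau^{dr}_{i\alpha}$, $r^{C2P}_{i\alpha}=pR\sum_j q_{\alpha j}t_{\alpha j}$. A matrix $\bm x\in\mathbb R^{L\times L}_{\ge0}$ satisfies flow balance if $\sum_j(\sum_k x_{kj})q_{ji}=\sum_\alpha x_{i\alpha}$ for all $i$. $\mathcal{CV}(\bm b^C)$: maximize $N\log\sum_{i,\alpha}r^C_{i\alpha}x_{i\alpha}-\sum_{i,\alpha}\tau^{dr}_{i\alpha}x_{i\alpha}$ over $\bm x\ge0$ satisfying flow balance and $\sum_j x_{ji}\le b^C_i$ for all $i$. *)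

From HB Require Import structures.
From mathcomp Require Import all_boot all_order all_algebra.
From mathcomp Require Import reals exp.
Set Implicit Arguments. Unset Strict Implicit. Unset Printing Implicit Defensive.
Import Order.TTheory GRing.Theory Num.Theory.
Local Open Scope ring_scope.

Section RideHailing.
Variables (R : realType) (L : nat).
(* b i j : customer rate from region i to region j; t i j : travel time *)
Variables (b t : 'I_L -> 'I_L -> R).

Definition bsum (i : 'I_L) : R := \sum_(j < L) b i j.
Definition qm (i j : 'I_L) : R := b i j / bsum i.
Definition wbar (a : 'I_L) : R := \sum_(j < L) qm a j * t a j.
Definition tau_dr (i a : 'I_L) : R := t i a + wbar a.
Definition rC (p c Rr : R) (i a : 'I_L) : R := p * (1 - Rr) * wbar a - c * tau_dr i a.
Definition rC2P (p Rr : R) (i a : 'I_L) : R := p * Rr * wbar a.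

Definition flow_balance (x : 'M[R]_L) : Prop :=
  forall i : 'I_L, \sum_(j < L) (\sum_(k < L) x k j) * qm j i = \sum_(a < L) x i a.

Definition CV_feasible (bC : 'I_L -> R) (x : 'M[R]_L) : Prop :=
  [/\ forall i a, 0 <= x i a, flow_balance x & forall i, \sum_(j < L) x j i <= bC i].

Definition lin (w : 'I_L -> 'I_L -> R) (x : 'M[R]_L) : R :=
  \sum_(i < L) \sum_(a < L) w i a * x i a.

Definition CV_revenue p c Rr (x : 'M[R]_L) : R := lin (rC p c Rr) x.
Definition platform_profit p Rr (x : 'M[R]_L) : R := lin (rC2P p Rr) x.
Definition active_mass (x : 'M[R]_L) : R := lin tau_dr x.

Definition CV_obj (N p c Rr : R) (x : 'M[R]_L) : R :=
  N * ln (CV_revenue p c Rr x) - active_mass x.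

(* Optimal solution of CV(bC): the log requires positive revenue, so the
   effective domain is the feasible points with positive revenue. *)
Definition CV_optimal (N p c Rr : R) (bC : 'I_L -> R) (x : 'M[R]_L) : Prop :=
  [/\ CV_feasible bC x, 0 < CV_revenue p c Rr x &
      forall y, CV_feasible bC y -> 0 < CV_revenue p c Rr y ->
        CV_obj N p c Rr y <= CV_obj N p c Rr x].

Definition LP_optimal (p c Rr : R) (bC : 'I_L -> R) (m0 : R) (x : 'M[R]_L) : Prop :=
  [/\ CV_feasible bC x, active_mass x <= m0 &
      forall y, CV_feasible bC y -> active_mass y <= m0 ->
        CV_revenue p c Rr y <= CV_revenue p c Rr x].

End RideHailing.

From HB Require Import structures.
From mathcomp Require Import all_boot all_order all_algebra.
From mathcomp Require Import reals exp.
From mathcomp Require Import lra ring.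
Set Implicit Arguments. Unset Strict Implicit. Unset Printing Implicit Defensive.
Import Order.TTheory GRing.Theory Num.Theory.
Local Open Scope ring_scope.

(* ln is strictly concave and the feasible set is convex, so two CV optima
   with different revenues would both be beaten by their midpoint: all optima
   share the revenue and then, having equal objective values, the active mass.
   Comparing the optima for N1 <= N2 with each other (revealed preference)
   shows that revenue and active mass both grow with N; since the platform
   profit is a nonnegative combination of revenue and active mass, it grows
   too.  Finally, an optimum beats every feasible point of no larger active
   mass in N ln(revenue) - mass, hence in revenue. *)

Lemma ln_midpoint_gt (R : realType) (u v : R) : 0 < u -> 0 < v -> u != v ->
  ln u + ln v < 2 * ln ((u + v) / 2).
Proof.
move=> u_gt0 v_gt0 neq_uv.
have mid_gt0 : 0 < (u + v) / 2 by lra.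
rewrite -lnM ?posrE // mulr_natl -lnXn // ltr_ln ?posrE ?exprn_gt0 // ?mulr_gt0 //.
by case: (ltgtP u v) neq_uv => // lt_uv _; nra.
Qed.

Section LogUtilityMaximization.
Variables (R : realType) (V : lmodType R) (feasible : V -> Prop).
Variables (rev mass : {scalar V}).
Hypothesis feasible_convex : forall (l : R) x y, 0 <= l <= 1 ->
  feasible x -> feasible y -> feasible (l *: x + (1 - l) *: y).

Definition log_utility (N : R) (x : V) : R := N * ln (rev x) - mass x.

Definition log_utility_optimal (N : R) (x : V) : Prop :=
  [/\ feasible x, 0 < rev x &
      forall y, feasible y -> 0 < rev y -> log_utility N y <= log_utility N x].

Section FixedWeight.
Variable N : R.
Hypothesis N_gt0 : 0 < N.

Lemma log_utility_optimal_rev_unique x y :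
  log_utility_optimal N x -> log_utility_optimal N y -> rev x = rev y.
Proof.
move=> [fx rx_gt0 opt_x] [fy ry_gt0 opt_y].
have [//|neq_r] := eqVneq (rev x) (rev y); exfalso.
pose z := 2^-1 *: x + (1 - 2^-1) *: y.
have half : 1 - 2^-1 = 2^-1 :> R by lra.
have fz : feasible z by apply: feasible_convex => //; lra.
have revz : rev z = (rev x + rev y) / 2 by rewrite linearD !linearZ /= half; lra.
have massz : mass z = (mass x + mass y) / 2 by rewrite linearD !linearZ /= half; lra.
have revz_gt0 : 0 < rev z by lra.
have lt_mid : log_utility N x + log_utility N y < 2 * log_utility N z.
  rewrite /log_utility revz massz.
  have := ln_midpoint_gt rx_gt0 ry_gt0 neq_r; rewrite -(ltr_pM2l N_gt0); lra.
have := opt_x z fz revz_gt0; have := opt_y z fz revz_gt0; lra.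
Qed.

Lemma log_utility_optimal_mass_unique x y :
  log_utility_optimal N x -> log_utility_optimal N y -> mass x = mass y.
Proof.
move=> opt_x opt_y; have eq_rev := log_utility_optimal_rev_unique opt_x opt_y.
case: opt_x opt_y => fx rx_gt0 le_x [fy ry_gt0 le_y].
have := le_x y fy ry_gt0; have := le_y x fx rx_gt0.
rewrite /log_utility eq_rev; lra.
Qed.

Lemma log_utility_optimal_maximizes_rev x y : log_utility_optimal N x ->
  feasible y -> mass y <= mass x -> rev y <= rev x.
Proof.
move=> [_ rx_gt0 le_x] fy le_mass.
have [ry_le0|ry_gt0] := lerP (rev y) 0; first exact: le_trans ry_le0 (ltW rx_gt0).
rewrite -ler_ln ?posrE // -(ler_pM2l N_gt0).
have := le_x y fy ry_gt0; rewrite /log_utility; lra.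
Qed.

End FixedWeight.

Section IncreasingWeight.
Variables (N1 N2 : R) (x1 x2 : V).
Hypotheses (N1_gt0 : 0 < N1) (le_N12 : N1 <= N2).
Hypotheses (opt_x1 : log_utility_optimal N1 x1) (opt_x2 : log_utility_optimal N2 x2).

Lemma log_utility_optimal_rev_mono : rev x1 <= rev x2.
Proof.
have [eq_N|neq_N] := eqVneq N1 N2.
  have opt_x2_N1 : log_utility_optimal N1 x2 by rewrite eq_N.
  by rewrite (log_utility_optimal_rev_unique N1_gt0 opt_x1 opt_x2_N1).
have N12_gt0 : 0 < N2 - N1 by rewrite subr_gt0 lt_neqAle neq_N.
case: opt_x1 opt_x2 => fx1 r1_gt0 le_x1 [fx2 r2_gt0 le_x2].
rewrite -ler_ln ?posrE // -subr_ge0 -(pmulr_rge0 _ N12_gt0) mulrBl !mulrBr.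
have := le_x1 x2 fx2 r2_gt0; have := le_x2 x1 fx1 r1_gt0; rewrite /log_utility; lra.
Qed.

Lemma log_utility_optimal_mass_mono : mass x1 <= mass x2.
Proof.
case: opt_x1 opt_x2 => _ r1_gt0 le_x1 [fx2 r2_gt0 _].
have : 0 <= N1 * (ln (rev x2) - ln (rev x1)).
  apply: mulr_ge0; first exact: ltW.
  by rewrite subr_ge0 ler_ln ?posrE // log_utility_optimal_rev_mono.
have := le_x1 x2 fx2 r2_gt0; rewrite /log_utility mulrBr; lra.
Qed.

End IncreasingWeight.

End LogUtilityMaximization.

Section RideHailing.
Variables (R : realType) (L : nat) (b t : 'I_L -> 'I_L -> R).

Lemma lin_is_scalar (w : 'I_L -> 'I_L -> R) : scalar (lin w).
Proof.
move=> k x y; rewrite /lin mulr_sumr -big_split; apply: eq_bigr => i _ /=.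
rewrite mulr_sumr -big_split; apply: eq_bigr => a _ /=.
by rewrite !mxE mulrDr mulrCA.
Qed.

HB.instance Definition _ p c Rr := GRing.isLinear.Build R 'M[R]_L R *%R
  (CV_revenue b t p c Rr) (lin_is_scalar (rC b t p c Rr)).

HB.instance Definition _ := GRing.isLinear.Build R 'M[R]_L R *%R
  (active_mass b t) (lin_is_scalar (tau_dr b t)).

Lemma CV_optimalE N p c Rr bC (x : 'M[R]_L) :
  CV_optimal b t N p c Rr bC x <->
  log_utility_optimal (CV_feasible b bC) (CV_revenue b t p c Rr) (active_mass b t) N x.
Proof. by []. Qed.

Lemma CV_feasible_convex bC (l : R) (x y : 'M[R]_L) : 0 <= l <= 1 ->
  CV_feasible b bC x -> CV_feasible b bC y -> CV_feasible b bC (l *: x + (1 - l) *: y).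
Proof.
move=> /andP[l_ge0 l_le1] [x_ge0 flow_x cap_x] [y_ge0 flow_y cap_y].
have col_comb j : \sum_(k < L) (l *: x + (1 - l) *: y) k j =
    l * \sum_(k < L) x k j + (1 - l) * \sum_(k < L) y k j.
  by rewrite !mulr_sumr -big_split; apply: eq_bigr => k _; rewrite !mxE.
have row_comb i : \sum_(a < L) (l *: x + (1 - l) *: y) i a =
    l * \sum_(a < L) x i a + (1 - l) * \sum_(a < L) y i a.
  by rewrite !mulr_sumr -big_split; apply: eq_bigr => a _; rewrite !mxE.
split.
- move=> i a; rewrite !mxE; have := x_ge0 i a; have := y_ge0 i a; nra.
- move=> i; under eq_bigr do rewrite col_comb mulrDl -!mulrA.
  by rewrite big_split -!mulr_sumr flow_x flow_y row_comb.
- move=> i; rewrite col_comb; have := cap_x i; have := cap_y i; nra.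
Qed.

Lemma platform_profitE p c Rr (x : 'M[R]_L) : Rr != 1 ->
  platform_profit b t p Rr x =
  Rr / (1 - Rr) * (CV_revenue b t p c Rr x + c * active_mass b t x).
Proof.
move=> Rr_neq1; have Rr1_neq0 : 1 - Rr != 0 by rewrite subr_eq0 eq_sym.
rewrite /platform_profit /CV_revenue /active_mass /lin.
rewrite mulr_sumr -big_split mulr_sumr; apply: eq_bigr => i _ /=.
rewrite mulr_sumr -big_split mulr_sumr; apply: eq_bigr => a _ /=.
by rewrite /rC /rC2P /tau_dr; field.
Qed.

End RideHailing.

Theorem proposition2 (R : realType) (L : nat) (b t : 'I_L -> 'I_L -> R)
  (p c Rr N : R) (bC : 'I_L -> R) :
  (forall i j, 0 <= b i j) ->
  (forall i, 0 < bsum b i) ->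
  (forall i j, i != j -> 0 < t i j) ->
  (forall i, t i i = 0) ->
  0 < p -> 0 <= c -> 0 < Rr < 1 -> 0 < N ->
  (forall i, 0 <= bC i <= bsum b i) ->
  (* 1. same platform profit *)
  (forall x y, CV_optimal b t N p c Rr bC x -> CV_optimal b t N p c Rr bC y ->
     platform_profit b t p Rr x = platform_profit b t p Rr y) /\
  (* 2. same active mass *)
  (forall x y, CV_optimal b t N p c Rr bC x -> CV_optimal b t N p c Rr bC y ->
     active_mass b t x = active_mass b t y) /\
  (* 3. platform profit non-decreasing in the fleet mass N *)
  (forall N1 N2 x1 x2, 0 < N1 -> N1 <= N2 ->
     CV_optimal b t N1 p c Rr bC x1 -> CV_optimal b t N2 p c Rr bC x2 ->
     platform_profit b t p Rr x1 <= platform_profit b t p Rr x2) /\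
  (* 4. every CV optimum solves the LP with active mass bound m0 *)
  (forall x, CV_optimal b t N p c Rr bC x ->
     LP_optimal b t p c Rr bC (active_mass b t x) x).
Proof.
move=> _ _ _ _ _ c_ge0 /andP[Rr_gt0 Rr_lt1] N_gt0 _.
have convex := @CV_feasible_convex R L b bC.
have Rr_neq1 : Rr != 1 by rewrite lt_eqF.
have profitE x := platform_profitE b t p c x Rr_neq1.
split; [|split; [|split]].
- move=> x y /CV_optimalE opt_x /CV_optimalE opt_y.
  rewrite !profitE (log_utility_optimal_rev_unique convex N_gt0 opt_x opt_y).
  by rewrite (log_utility_optimal_mass_unique convex N_gt0 opt_x opt_y).
- move=> x y /CV_optimalE opt_x /CV_optimalE opt_y.
  exact (log_utility_optimal_mass_unique convex N_gt0 opt_x opt_y).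
- move=> N1 N2 x1 x2 N1_gt0 le_N12 /CV_optimalE opt_x1 /CV_optimalE opt_x2.
  rewrite !profitE ler_pM2l ?divr_gt0 ?subr_gt0 //.
  apply: lerD; last apply: ler_wpM2l => //.
    exact (log_utility_optimal_rev_mono convex N1_gt0 le_N12 opt_x1 opt_x2).
  exact (log_utility_optimal_mass_mono convex N1_gt0 le_N12 opt_x1 opt_x2).
- move=> x /CV_optimalE opt_x; have [feasible_x _ _] := opt_x.
  split=> // y feasible_y le_mass.
  exact (log_utility_optimal_maximizes_rev N_gt0 opt_x feasible_y le_mass).
Qed.
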